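(* Let $(T,A,m|_A)$ be a nonsingular open dynamical system and let $\Omega:=A_\infty\setminus K_\infty$. Then $A$ is the disjoint union $A=K_\infty\cup\Omega\cup H_\infty$, and moreover: (a) $T^{-1}\big(\bigcup_{n\ge0}K_n\big)\subseteq\bigcup_{n\ge0}K_n$ modulo $m|_A$-null sets; (b) $T(\Omega)=\Omega$; (c) for each $n\ge 2$, $T$ maps $H_n\setminus K_\infty$ onto $H_{n-1}\setminus K_\infty$, and $T:(H_n\setminus K_\infty)\to(H_{n-1}\setminus K_\infty)$ is nonsingular with respect to the restrictions of $m$ to these sets; (d) $K_\infty=\bigcup_{n=0}^\infty K_n$.
   Context: Let $(X,m)$ be a measure space, $A\subsetneq X$ measurable and $T:A\to X$ measurable such that: $H_0:=T(A)\setminus A$ is measurable; $m(A\cap T^{-1}H_0)>0$; $m(E)>0$ whenever $E\subseteq X$ is measurable with $m(T^{-1}E)>0$; and $T$ is locally finite-to-one (each point of $X$ has finitely many, possibly zero, preimages in $A$). Such $(T,A,m|_A)$ is called a nonsingular open dynamical system. Preimages are taken in $A$: $T^{-1}E=\{y\in A:T(y)\in E\}$, and $T^{-k}\{x\}=\{y\in A: y,T(y),\dots,T^{k-1}(y)\in A,\ T^k(y)=x\}$. Define $A_0=A$, $A_n=\bigcap_{k=0}^nT^{-k}A=\{x:x,T(x),\dots,T^n(x)\in A\}$, $A_\infty=\bigcap_{n\ge0}A_n$, and $H_n=A_{n-1}\setminus A_n$ for $n\ge1$ (so $H_1=A\cap T^{-1}H_0$). Define $K_0=\{x\in A:T^{-1}\{x\}=\emptyset\}$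 and, for $n\ge0$, $K_n=\{x\in A:\min\{k\ge1:T^{-k}\{x\}=\emptyset\}=n+1\}$. Let $K_\infty$ be the set of $x_0\in A$ for which there is no sequence $(x_{-n})_{n\ge1}$ in $A$ with $T(x_{-n})=x_{-(n-1)}$ for all $n\ge1$. Put $H_\infty=\bigcup_{n\ge1}(H_n\setminus K_\infty)$. *)

From HB Require Import structures.
From mathcomp Require Import all_boot all_order all_algebra.
From mathcomp Require Import all_classical all_reals all_analysis.
Set Implicit Arguments. Unset Strict Implicit. Unset Printing Implicit Defensive.
Import Order.TTheory GRing.Theory Num.Theory.
Local Open Scope classical_set_scope.

(* Open dynamical system: T : X -> X, only its values on A matter. *)
Section OpenDyn.
Context {X : Type} (A : set X) (T : X -> X).

Definition preA (E : set X) : set X := A `&` T @^-1` E.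

Definition An (n : nat) : set X := [set x | forall k, (k <= n)%N -> A (iter k T x)].

Definition Ainf : set X := \bigcap_n An n.

Definition Hn (n : nat) : set X :=
  if n is k.+1 then An k `\` An k.+1 else (T @` A) `\` A.

Definition preimk (k : nat) (x : X) : set X :=
  [set y | (forall j, (j < k)%N -> A (iter j T y)) /\ iter k T y = x].

(* K_n = {x in A : min{k >= 1 : T^{-k}{x} = empty} = n+1} *)
Definition Kn (n : nat) : set X :=
  [set x | A x /\ preimk n.+1 x = set0 /\
           forall k, (1 <= k)%N -> (k <= n)%N -> preimk k x != set0].

Definition Kunion : set X := \bigcup_n Kn n.

Definition Kinf : set X :=
  [set x0 | A x0 /\ ~ exists s : nat -> X,
      s 0%N = x0 /\ forall n, A (s n.+1) /\ T (s n.+1) = s n].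

Definition Hinf : set X := \bigcup_(n in [set n | (1 <= n)%N]) (Hn n `\` Kinf).

Definition Omega : set X := Ainf `\` Kinf.

End OpenDyn.

From HB Require Import structures.
From mathcomp Require Import all_boot all_order all_algebra.
From mathcomp Require Import all_classical all_reals all_analysis.
From mathcomp Require Import zify.
Import Order.TTheory GRing.Theory Num.Theory.
Local Open Scope classical_set_scope.

(** A point of [A] lies outside [K_inf] exactly when it has an infinite
   backward orbit in [A]; this property moves forward and backward along [T],
   which gives the decomposition of [A] and parts (a)-(c).  For (d), a point
   of [K_inf] has no infinite backward orbit, and König's lemma (the fibres of
   [T] are finite) turns this into a bound on the length of its backward paths,
   i.e. some [T^{-k}{x}] is empty. *)

Section OpenDynamics.
Context {X : Type} (A : set X) (T : X -> X).

Definition has_backward_orbit (x : X) := exists s : nat -> X,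
  s 0%N = x /\ forall n, A (s n.+1) /\ T (s n.+1) = s n.

Lemma An0 : An A T 0 = A.
Proof. by apply/seteqP; split=> [x /(_ 0%N (leqnn 0)) | x Ax [|k]]. Qed.

Lemma AnS n x : An A T n.+1 x <-> A x /\ An A T n (T x).
Proof.
split=> [hx | [Ax hTx] [|k] kn //]; last by rewrite iterSr; exact: hTx.
by split=> [|k kn]; [exact: (hx 0%N) | rewrite -iterSr; exact: hx].
Qed.

Lemma An_sub {n x} : An A T n x -> A x.
Proof. by move=> /(_ 0%N (leq0n n)). Qed.

Lemma Ainf_sub {x} : Ainf A T x -> A x.
Proof. by move=> /(_ 0%N I); exact: An_sub. Qed.

Lemma backward_orbit_notKinf {x} :
  A x -> ~ Kinf A T x -> has_backward_orbit x.
Proof. by move=> Ax nKx; apply: contrapT => nox; exact: nKx. Qed.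

Lemma backward_orbit_image {y} :
  A y -> has_backward_orbit y -> has_backward_orbit (T y).
Proof.
move=> Ay [s [s0 hs]]; exists (fun n => if n is k.+1 then s k else T y).
by split=> // -[|n]; [rewrite s0 | exact: hs].
Qed.

Lemma backward_orbit_preimage {x} : has_backward_orbit x ->
  exists y, [/\ A y, T y = x & has_backward_orbit y].
Proof.
move=> [s [s0 hs]]; have [As1 Ts1] := hs 0%N.
by exists (s 1%N); split; [| rewrite Ts1 | exists (fun n => s n.+1)].
Qed.

Lemma Kinf_preimage {y} : A y -> Kinf A T (T y) -> Kinf A T y.
Proof. by move=> Ay [_ noTy]; split=> // /(backward_orbit_image Ay). Qed.

Lemma preA_Kinf : preA A T (Kinf A T) `<=` Kinf A T.
Proof. by move=> y [Ay]; exact: Kinf_preimage. Qed.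

Lemma notKinf_image {y} : A y -> ~ Kinf A T y -> ~ Kinf A T (T y).
Proof. by move=> Ay nKy /(Kinf_preimage Ay). Qed.

Definition preimk_unbounded (x : X) := forall k, preimk A T k x !=set0.

Lemma backward_orbit_preimk_unbounded {x} :
  has_backward_orbit x -> preimk_unbounded x.
Proof.
move=> [s [s0 hs]] k.
have iter_s j i : iter j T (s (j + i)%N) = s i.
  by elim: j i => [|j IH] i //=; rewrite -iterS iterSr addSn (hs _).2.
exists (s k); split; last by rewrite -s0 -(iter_s k 0%N) addn0.
move=> j jk; have -> : k = (j + (k - j.+1).+1)%N by lia.
by rewrite iter_s; exact: (hs _).1.
Qed.

Lemma preimk_eq0_mono k l x :
  (k <= l)%N -> preimk A T k x = set0 -> preimk A T l x = set0.
Proof.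
move=> kl pk0; apply/seteqP; split=> // y [Ay Tly].
suff : preimk A T k x (iter (l - k) T y) by rewrite pk0.
split; last by rewrite -iterD subnKC.
by move=> j jk; rewrite -iterD; apply: Ay; lia.
Qed.

Lemma Hn_notAinf {x} :
  A x -> ~ Ainf A T x -> exists2 n, (1 <= n)%N & Hn A T n x.
Proof.
move=> Ax nAx; have exn : exists n, `[< ~ An A T n x >].
  apply: contrapT => hn; apply: nAx => n _; apply: contrapT => nAnx.
  by apply: hn; exists n; exact/asboolP.
case: (ex_minnP exn) => -[|n] /asboolP nAnx minn; first by rewrite An0 in nAnx.
exists n.+1 => //; split=> //; apply: contrapT => /asboolT/minn; lia.
Qed.

Lemma Kinf_Omega_Hinf_partition :
  A = Kinf A T `|` Omega A T `|` Hinf A T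
  /\ [/\ Kinf A T `&` Omega A T = set0, Kinf A T `&` Hinf A T = set0
       & Omega A T `&` Hinf A T = set0].
Proof.
split; last first.
  split; rewrite -subset0.
  - by move=> x [Kx [_ nKx]].
  - by move=> x [Kx [n _ [_ nKx]]].
  - by move=> x [[Ainfx _] [[|n] //= _ [[_ nAx] _]]]; exact/nAx/Ainfx.
apply/seteqP; split=> x.
  move=> Ax; have [Kx|nKx] := pselect (Kinf A T x); first by left; left.
  have [Ainfx|nAinfx] := pselect (Ainf A T x); first by left; right.
  by right; have [n n1 Hnx] := Hn_notAinf Ax nAinfx; exists n.
case=> [[[]//|[/Ainf_sub]//]|[[|n] //= _ [[/An_sub]]]] //.
Qed.

Lemma image_Omega : T @` Omega A T = Omega A T.
Proof.
apply/seteqP; split=> y.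
  move=> [x [Ainfx nKx] <-]; have Ax := Ainf_sub Ainfx.
  split; last exact: notKinf_image.
  by move=> n _; have /AnS[] : An A T n.+1 x by exact: Ainfx.
move=> [Ainfy nKy]; have Ay := Ainf_sub Ainfy.
have [x [Ax Txy ox]] := backward_orbit_preimage (backward_orbit_notKinf Ay nKy).
exists x => //; split; last by move=> [].
move=> [|n] _; first by rewrite An0.
by apply/AnS; rewrite Txy; split=> //; exact: Ainfy.
Qed.

Lemma Hn_notKinf_image n x : (Hn A T n.+2 `\` Kinf A T) x ->
  (Hn A T n.+1 `\` Kinf A T) (T x).
Proof.
move=> [[Anx nAnx] nKx]; have Ax := An_sub Anx.
split; last exact: notKinf_image.
by split; [case/AnS: Anx | move=> ?; apply: nAnx; apply/AnS].
Qed.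

Lemma image_Hn_notKinf n :
  T @` (Hn A T n.+2 `\` Kinf A T) = Hn A T n.+1 `\` Kinf A T.
Proof.
apply/seteqP; split=> [y [x Hx <-] | y [[Any nAny] nKy]].
  exact: Hn_notKinf_image.
have oy := backward_orbit_notKinf (An_sub Any) nKy.
have [x [Ax Txy ox]] := backward_orbit_preimage oy.
exists x => //; split; last by move=> [].
by split; [apply/AnS; rewrite Txy | case/AnS; rewrite Txy].
Qed.

Lemma Hn_notKinf_preA n E :
  (Hn A T n.+2 `\` Kinf A T) `&` preA A T E
  `<=` preA A T ((Hn A T n.+1 `\` Kinf A T) `&` E).
Proof. by move=> x [Hx [Ax TEx]]; do 2!split=> //; exact: Hn_notKinf_image. Qed.

End OpenDynamics.

Lemma seq_upclosed_bound (X : eqType) (s : seq X) (P : X -> nat -> Prop) :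
  (forall y, y \in s -> exists k, P y k) ->
  (forall y k l, (k <= l)%N -> P y k -> P y l) ->
  exists K, forall y, y \in s -> P y K.
Proof.
move=> hP Pmono; elim: s hP => [|a s IH] hP; first by exists 0%N.
have [ka Pa] := hP a (mem_head _ _).
have [Ks Ps] : exists K, forall y, y \in s -> P y K.
  by apply: IH => y ys; apply: hP; rewrite in_cons ys orbT.
exists (maxn ka Ks) => y; rewrite in_cons => /orP[/eqP->|ys].
  exact: Pmono (leq_maxl _ _) Pa.
exact: Pmono (leq_maxr _ _) (Ps _ ys).
Qed.

Section FiniteFibres.
Context {X : eqType} (A : set X) (T : X -> X).
Hypothesis fin_fibres : forall x, finite_set (A `&` T @^-1` [set x]).

(* König's lemma: if every preimage [y] of [x] had a bound [k_y] on its
   backward paths, then [1 + max k_y] would bound those of [x]. *)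
Lemma preimk_unbounded_preimage x : preimk_unbounded A T x ->
  exists y, [/\ A y, T y = x & preimk_unbounded A T y].
Proof.
move=> ux; have /finite_seqP[s fibre] := fin_fibres x.
apply: contrapT => noy.
have [K sK] : exists K, forall y, y \in s -> preimk A T K y = set0.
  apply: seq_upclosed_bound => [y|y k l kl]; last exact: preimk_eq0_mono.
  move=> ys; have [Ay Tyx] : (A `&` T @^-1` [set x]) y by rewrite fibre.
  apply: contrapT => nk; apply: noy; exists y; split=> // k.
  by apply: contrapT => /set0P/negP/negbNE/eqP pk0; apply: nk; exists k.
have [z [Az TKz]] := ux K.+1.
have zs : iter K T z \in s.
  have : (A `&` T @^-1` [set x]) (iter K T z).
    by split; [exact: Az | rewrite /= -iterS].
  by rewrite fibre.
suff : preimk A T K (iter K T z) z by rewrite sK.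
by split=> // j jK; apply: Az; lia.
Qed.

Lemma preimk_unbounded_backward_orbit x :
  preimk_unbounded A T x -> has_backward_orbit A T x.
Proof.
move=> ux; have /choice[g hg] : forall t, exists u, preimk_unbounded A T t ->
    [/\ A u, T u = t & preimk_unbounded A T u].
  move=> t; have [|nut] := pselect (preimk_unbounded A T t); last by exists t.
  by move=> /preimk_unbounded_preimage[y hy]; exists y.
have ug n : preimk_unbounded A T (iter n g x) by elim: n => //= n; case/hg.
by exists (fun n => iter n g x); split=> // n; have [] := hg _ (ug n).
Qed.

Lemma Kinf_Kunion : Kinf A T = Kunion A T.
Proof.
apply/seteqP; split=> x; last first.
  move=> [n _ [Ax [pn0 _]]]; split=> // ox.
  by have := backward_orbit_preimk_unbounded _ _ ox n.+1; rewrite pn0 => -[].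
move=> [Ax nox]; have exk : exists k, `[< preimk A T k x = set0 >].
  apply: contrapT => nk; apply/nox/preimk_unbounded_backward_orbit => k.
  by apply/set0P/eqP => pk0; apply: nk; exists k; exact/asboolP.
case: (ex_minnP exk) => -[|n] /asboolP pn0 minn.
  suff : preimk A T 0 x x by rewrite pn0.
  by split.
exists n => //; split=> //; split=> // k k1 kn; apply/eqP => /asboolT/minn; lia.
Qed.

End FiniteFibres.

Local Open Scope ring_scope.
Local Open Scope ereal_scope.

Lemma preA_negligible {d} {X : measurableType d} {R : realType}
    (m : {measure set X -> \bar R}) {A : set X} {T : X -> X} {E : set X} :
  measurable A -> measurable_fun A T ->
  (forall N, measurable N -> 0 < m (A `&` T @^-1` N) -> 0 < m N) ->
  m.-negligible E -> m.-negligible (preA A T E).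
Proof.
move=> mA mT nonsing [N [mN N0 EN]]; exists (A `&` T @^-1` N); split.
- exact: mT.
- apply/eqP; rewrite eq_le measure_ge0 andbT leNgt; apply/negP.
  by move=> /(nonsing _ mN); rewrite N0 ltxx.
- by move=> x [Ax TEx]; split=> //; exact: EN.
Qed.

Theorem lemma1 (d : measure_display) (X : measurableType d) (R : realType)
  (m : {measure set X -> \bar R}) (A : set X) (T : X -> X)
  (mA : measurable A) (AnX : A != [set: X])
  (mT : measurable_fun A T)
  (mH0 : measurable (Hn A T 0))
  (posH1 : 0 < m (A `&` T @^-1` Hn A T 0))
  (nonsing : forall E, measurable E -> 0 < m (A `&` T @^-1` E) -> 0 < m E)
  (finpre : forall x, finite_set (A `&` T @^-1` [set x])) :
  [/\ A = Kinf A T `|` Omega A T `|` Hinf A T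
      /\ [/\ Kinf A T `&` Omega A T = set0, Kinf A T `&` Hinf A T = set0
           & Omega A T `&` Hinf A T = set0],
    (* (a) *)
    m.-negligible (preA A T (Kunion A T) `\` Kunion A T),
    (* (b) *)
    T @` Omega A T = Omega A T,
    (* (c) *)
    (forall n, (2 <= n)%N ->
       T @` (Hn A T n `\` Kinf A T) = Hn A T n.-1 `\` Kinf A T /\
       forall E, measurable E ->
         m.-negligible ((Hn A T n.-1 `\` Kinf A T) `&` E) ->
         m.-negligible ((Hn A T n `\` Kinf A T) `&` preA A T E))
  & (* (d) *)
    Kinf A T = Kunion A T].
Proof.
have KK := Kinf_Kunion A T finpre.
split.
- exact: Kinf_Omega_Hinf_partition.
- rewrite -KK; apply: negligibleS _ (negligible_set0 m).
  by move=> y [/(preA_Kinf A T)].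
- exact: image_Omega.
- move=> [|[|n]] // _; split; first exact: image_Hn_notKinf.
  move=> E _ /= negE; apply: negligibleS (Hn_notKinf_preA A T n E) _.
  exact (preA_negligible m mA mT nonsing negE).
- exact: KK.
Qed.
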